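(* Let $0<q<1$, let $a,b,c,d\in\mathbb{C}$ with $aq\notin\{q^{-m}:m\in\mathbb{N}\}$, let $|t|<1$ with $tc,td\notin\{q^{-m}:m\in\mathbb{N}\}$, let $n\in\mathbb{N}$ and $x=\cos\theta$, $\theta\in[0,\pi]$. Then \[ \sum_{k=0}^\infty\frac{t^k}{(q;q)_k}\,p_n(q^k;a,b;q)\,Q_k(x;c,d|q)=\frac{(tc,td;q)_\infty}{(te^{i\theta},te^{-i\theta};q)_\infty}\,{}_4\phi_3\!\left(\begin{matrix}q^{-n},\,abq^{n+1},\,te^{i\theta},\,te^{-i\theta}\\ aq,\,tc,\,td\end{matrix};q,q\right). \]
   Context: $(x;q)_k=\prod_{j=0}^{k-1}(1-xq^j)$, $(x;q)_\infty=\prod_{j\ge0}(1-xq^j)$, $(x_1,\dots,x_r;q)_k=\prod_i(x_i;q)_k$. ${}_{r}\phi_{s}\!\left(\begin{smallmatrix}a_1,\dots,a_r\\ b_1,\dots,b_s\end{smallmatrix};q,z\right)=\sum_{j\ge0}\frac{(a_1,\dots,a_r;q)_j}{(q,b_1,\dots,b_s;q)_j}\bigl((-1)^jq^{j(j-1)/2}\bigr)^{1+s-r}z^j$. Little $q$-Jacobi polynomials: $p_n(x;a,b;q)={}_2\phi_1\!\left(\begin{smallmatrix}q^{-n},abq^{n+1}\\ aq\end{smallmatrix};q,qx\right)$. Al-Salam–Chihara polynomials: $Q_n(x;c,d|q)=\frac{(cd;q)_n}{c^n}\,{}_3\phi_2\!\left(\begin{smallmatrix}q^{-n},ce^{i\theta},ce^{-i\theta}\\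 cd,\,0\end{smallmatrix};q,q\right)$, $x=\cos\theta$. *)

From Stdlib Require Import Reals ClassicalEpsilon List.
Open Scope R_scope.

Definition Cpx : Type := (R * R)%type.
Definition RtoC (r : R) : Cpx := (r, 0).
Definition C0 : Cpx := (0, 0).
Definition C1 : Cpx := (1, 0).
Definition Cadd (z w : Cpx) : Cpx := (fst z + fst w, snd z + snd w).
Definition Copp (z : Cpx) : Cpx := (- fst z, - snd z).
Definition Csub (z w : Cpx) : Cpx := Cadd z (Copp w).
Definition Cmul (z w : Cpx) : Cpx :=
  (fst z * fst w - snd z * snd w, fst z * snd w + snd z * fst w).
Definition Cinv (z : Cpx) : Cpx :=
  (fst z / (fst z ^ 2 + snd z ^ 2), - snd z / (fst z ^ 2 + snd z ^ 2)).
Definition Cdiv (z w : Cpx) : Cpx := Cmul z (Cinv w).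
Definition Cnorm (z : Cpx) : R := sqrt (fst z ^ 2 + snd z ^ 2).
Fixpoint Cpow (z : Cpx) (n : nat) : Cpx :=
  match n with O => C1 | S m => Cmul (Cpow z m) z end.
Definition Cexpi (th : R) : Cpx := (cos th, sin th).

Definition Cconv (u : nat -> Cpx) (l : Cpx) : Prop :=
  forall eps : R, eps > 0 -> exists N : nat, forall m : nat,
    (m >= N)%nat -> Cnorm (Csub (u m) l) < eps.
Fixpoint Csum (f : nat -> Cpx) (n : nat) : Cpx :=
  match n with O => C0 | S m => Cadd (Csum f m) (f m) end.
(* the limit of a sequence (meaningful when it converges) *)
Definition Clim (u : nat -> Cpx) : Cpx := epsilon (inhabits C0) (fun l => Cconv u l).
Definition Cseries (f : nat -> Cpx) : Cpx := Clim (Csum f).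

Fixpoint qpoch (x : Cpx) (q : R) (k : nat) : Cpx :=
  match k with
  | O => C1
  | S j => Cmul (qpoch x q j) (Csub C1 (Cmul x (RtoC (q ^ j))))
  end.
Definition qpoch_inf (x : Cpx) (q : R) : Cpx := Clim (qpoch x q).
Definition qpoch_list (xs : list Cpx) (q : R) (k : nat) : Cpx :=
  fold_right (fun x acc => Cmul (qpoch x q k) acc) C1 xs.

Definition rphis (al bl : list Cpx) (q : R) (z : Cpx) : Cpx :=
  Cseries (fun j =>
    Cmul (Cdiv (qpoch_list al q j) (qpoch_list (RtoC q :: bl) q j))
      (Cmul (RtoC (powerRZ ((-1) ^ j * q ^ (Nat.div (j * (j - 1)) 2))
                   (1 + Z.of_nat (length bl) - Z.of_nat (length al))%Z))
            (Cpow z j))).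

(* little q-Jacobi: p_n(x;a,b;q) = 2phi1(q^{-n}, a b q^{n+1}; a q; q, q x) *)
Definition little_qjacobi (n : nat) (x a b : Cpx) (q : R) : Cpx :=
  rphis (RtoC (/ q ^ n) :: Cmul (Cmul a b) (RtoC (q ^ (S n))) :: nil)
        (Cmul a (RtoC q) :: nil) q (Cmul (RtoC q) x).

(* Al-Salam--Chihara: Q_n(cos th; c, d | q)
   = (cd;q)_n / c^n * 3phi2(q^{-n}, c e^{i th}, c e^{-i th}; cd, 0; q, q),
   written as the (terminating, j <= n) sum with (cd;q)_n/(cd;q)_j
   simplified to (cd q^j;q)_{n-j}. *)
Definition al_salam_chihara (n : nat) (th : R) (c d : Cpx) (q : R) : Cpx :=
  Cdiv
    (Csum (fun j =>
       Cmul (Cdiv (qpoch_list (RtoC (/ q ^ n) :: Cmul c (Cexpi th)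
                               :: Cmul c (Cexpi (- th)) :: nil) q j)
                  (qpoch (RtoC q) q j))
            (Cmul (qpoch (Cmul (Cmul c d) (RtoC (q ^ j))) q (n - j))
                  (RtoC (q ^ j)))) (S n))
    (Cpow c n).

From Pilot Require Import Defs.
From Stdlib Require Import Reals List Lra Lia ClassicalEpsilon.
From Coquelicot Require Complex.
Open Scope R_scope.

(* Write g_k = Q_k(x;c,d|q)/(q;q)_k.  The proof rests on the generating function
       (GF)   sum_k g_k s^k = (sc, sd; q)_oo / (s e^{i th}, s e^{-i th}; q)_oo,
   valid for |s| < 1.  Granting (GF), expand the terminating series
   p_n(q^k) = sum_{j<=n} A_j q^{jk}; after exchanging the finite j-sum with the
   k-sum, the partial sums of the left-hand side become
   sum_{j<=n} A_j sum_k g_k (t q^j)^k, and (GF) at s = t q^j together with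
   (x;q)_oo = (x;q)_j (x q^j;q)_oo turns the limit into the 4phi3 on the right.

   (GF) is proved in three steps.
   1. g_k is the Cauchy product of u_i = (c e^{-i th};q)_i e^{i i th}/(q;q)_i and
      v_l = (d e^{i th};q)_l e^{-i l th}/(q;q)_l: both sides satisfy the same
      three-term recurrence (for Q_k it is the classical recurrence of the
      Al-Salam--Chihara polynomials, proved from the explicit 3phi2 sum).
   2. Hence |g_k| <= C (k+1), so G(s) = sum_k g_k s^k converges for |s| < 1,
      G(q^N s) -> 1, and the recurrence gives the q-difference equation
      G(s) (1 - s e^{i th})(1 - s e^{-i th}) = G(qs) (1 - cs)(1 - ds).
   3. Iterating the q-difference equation N times and letting N -> oo gives (GF). *)

Module BilinearGeneratingFunction.
Import Complex.

(* The statement's complex operations are definitionally Coquelicot's; [toC]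
   exposes the latter so that Coquelicot's field structure and lemmas apply. *)
Ltac toC := change Defs.Cmul with Cmult in *; change Defs.Cadd with Cplus in *;
  change Defs.Csub with Cminus in *; change Defs.Copp with Copp in *;
  change Defs.Cdiv with Cdiv in *; change Defs.Cinv with Cinv in *;
  change Defs.Cnorm with Cmod in *; change Defs.C0 with (RtoC 0) in *;
  change Defs.C1 with (RtoC 1) in *; change Defs.Cpx with C in *;
  change Defs.RtoC with RtoC in *;
  try match goal with |- @eq _ ?a ?b => change (@eq C a b) end.

(* [ring] and [field] recognise the complex field only on goals whose sides are
   headed by a field operation, hence this padding. *)
Lemma Ceq_via_sum (a b : C) : (0 + a = 0 + b)%C -> a = b.
Proof. rewrite !Cplus_0_l. auto. Qed.
Ltac cring := toC; unfold Cdiv; apply Ceq_via_sum; ring.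
Ltac cfield := toC; apply Ceq_via_sum; field.

Lemma Cpow_eq (z : C) n : Defs.Cpow z n = (z ^ n)%C.
Proof. induction n; simpl; toC. reflexivity. rewrite IHn. ring. Qed.

Lemma RtoC_powS (q : R) j : RtoC (q ^ S j) = (RtoC q * RtoC (q ^ j))%C.
Proof. simpl. rewrite RtoC_mult. reflexivity. Qed.

Lemma RtoC_neq_0 (x : R) : x <> 0 -> RtoC x <> RtoC 0.
Proof. intros Hx E. apply RtoC_inj in E. auto. Qed.

Lemma pow_le_one x n : 0 <= x <= 1 -> x ^ n <= 1.
Proof. intros H. induction n; simpl. lra. pose proof (pow_le x n ltac:(lra)). nra. Qed.

Lemma one_minus_qpow_neq_0 q i : 0 < q < 1 -> (1 - RtoC (q ^ S i))%C <> RtoC 0.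
Proof.
  intros Hq. rewrite <- RtoC_minus. apply RtoC_neq_0.
  pose proof (pow_le_one q i ltac:(lra)). pose proof (pow_lt q i ltac:(lra)). simpl. nra.
Qed.

Lemma exp_le_mono a b : a <= b -> exp a <= exp b.
Proof. intros [H|H]. left; apply exp_increasing; auto. subst; lra. Qed.

Lemma one_minus_ge_exp y r : 0 <= y <= r -> r < 1 -> exp (- (y / (1 - r))) <= 1 - y.
Proof.
  intros Hy Hr. rewrite exp_Ropp.
  assert (Hinv : 1 / (1 - y) <= exp (y / (1 - r))).
  { apply Rle_trans with (1 + y / (1 - r)); [|apply exp_ineq1_le].
    apply Rle_trans with (1 + y / (1 - y)). right. field. lra.
    apply Rplus_le_compat_l, Rmult_le_compat_l; [lra|]. apply Rinv_le_contravar; lra. }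
  pose proof (exp_pos (y / (1 - r))).
  apply Rmult_le_reg_l with (exp (y / (1 - r))). auto. rewrite Rinv_r by lra.
  apply Rmult_le_reg_l with (/ (1 - y)). apply Rinv_0_lt_compat. lra.
  replace (/ (1 - y) * (exp (y / (1 - r)) * (1 - y))) with (exp (y / (1 - r))) by (field; lra).
  unfold Rdiv in Hinv. lra.
Qed.

Lemma linear_geometric_bound y k : 0 <= y < 1 -> INR (S k) * y ^ k <= 1 / (1 - y).
Proof.
  intros Hy. assert (Hk : INR (S k) * y ^ k * (1 - y) <= 1 - y ^ S k).
  { induction k. simpl. lra.
    rewrite !S_INR in *. change (y ^ S k) with (y * y ^ k) in *. change (y ^ S (S k)) with (y * (y * y ^ k)).
    pose proof (pow_le y k ltac:(lra)). pose proof (pow_le_one y k ltac:(lra)).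
    assert (y * ((INR k + 1) * y ^ k * (1 - y)) <= y * (1 - y * y ^ k)) by (apply Rmult_le_compat_l; lra).
    assert (y * y ^ k <= 1) by nra.
    assert (y * y ^ k * (1 - y) <= 1 - y) by nra.
    replace ((INR k + 1 + 1) * (y * y ^ k) * (1 - y))
      with (y * ((INR k + 1) * y ^ k * (1 - y)) + y * y ^ k * (1 - y)) by ring.
    replace (1 - y * (y * y ^ k)) with (y * (1 - y * y ^ k) + (1 - y)) by ring.
    lra. }
  apply Rmult_le_reg_r with (1 - y). lra. unfold Rdiv. rewrite Rmult_1_l, Rinv_l by lra.
  pose proof (pow_le y (S k) ltac:(lra)). lra.
Qed.

Lemma Rabs_fst_le_Cmod (z : C) : Rabs (fst z) <= Cmod z.
Proof. apply re_le_Cmod. Qed.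

Lemma Rabs_snd_le_Cmod (z : C) : Rabs (snd z) <= Cmod z.
Proof. pose proof (Rmax_Cmod z). pose proof (Rmax_r (Rabs (fst z)) (Rabs (snd z))). lra. Qed.

Lemma Cmod_le_Rabs_sum (z : C) : Cmod z <= Rabs (fst z) + Rabs (snd z).
Proof.
  unfold Cmod. pose proof (Rabs_pos (fst z)). pose proof (Rabs_pos (snd z)).
  rewrite <- (sqrt_pow2 (Rabs (fst z) + Rabs (snd z))) by lra.
  apply sqrt_le_1_alt. rewrite <- (pow2_abs (fst z)), <- (pow2_abs (snd z)). nra.
Qed.

Lemma Cconv_components (u : nat -> C) (l : C) :
  Cconv u l <-> Un_cv (fun n => fst (u n)) (fst l) /\ Un_cv (fun n => snd (u n)) (snd l).
Proof.
  split.
  - intros H. split; intros eps Heps; destruct (H eps Heps) as [N HN]; exists N; intros m Hm;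
      specialize (HN m Hm); unfold R_dist; toC.
    + pose proof (Rabs_fst_le_Cmod (u m - l)%C). simpl in *. unfold Rminus. lra.
    + pose proof (Rabs_snd_le_Cmod (u m - l)%C). simpl in *. unfold Rminus. lra.
  - intros [H1 H2] eps Heps.
    destruct (H1 (eps/2)) as [N1 HN1]; [lra|]. destruct (H2 (eps/2)) as [N2 HN2]; [lra|].
    exists (max N1 N2). intros m Hm. toC.
    specialize (HN1 m ltac:(lia)). specialize (HN2 m ltac:(lia)). unfold R_dist in *.
    pose proof (Cmod_le_Rabs_sum (u m - l)%C). simpl in *. unfold Rminus in *. lra.
Qed.

Lemma Cconv_unique u a b : Cconv u a -> Cconv u b -> a = b.
Proof.
  rewrite !Cconv_components. intros [Ha1 Ha2] [Hb1 Hb2].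
  destruct a, b; simpl in *. f_equal; eapply UL_sequence; eauto.
Qed.

Lemma Clim_eq u l : Cconv u l -> Clim u = l.
Proof.
  intros H. unfold Clim. apply (Cconv_unique u); auto.
  apply epsilon_spec. exists l; auto.
Qed.

Lemma Cconv_Clim u l : Cconv u l -> Cconv u (Clim u).
Proof. intros H. rewrite (Clim_eq u l H). auto. Qed.

Lemma Cconv_plus u v a b : Cconv u a -> Cconv v b -> Cconv (fun n => u n + v n)%C (a + b)%C.
Proof.
  rewrite !Cconv_components. intros [H1 H2] [H3 H4]. split; simpl.
  apply (CV_plus _ _ _ _ H1 H3). apply (CV_plus _ _ _ _ H2 H4).
Qed.

Lemma Cconv_minus u v a b : Cconv u a -> Cconv v b -> Cconv (fun n => u n - v n)%C (a - b)%C.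
Proof.
  rewrite !Cconv_components. intros [H1 H2] [H3 H4]. split; simpl.
  apply (CV_plus _ _ _ _ H1 (CV_opp _ _ H3)). apply (CV_plus _ _ _ _ H2 (CV_opp _ _ H4)).
Qed.

Lemma Cconv_mult u v a b : Cconv u a -> Cconv v b -> Cconv (fun n => u n * v n)%C (a * b)%C.
Proof.
  rewrite !Cconv_components. intros [H1 H2] [H3 H4]. split; simpl.
  apply CV_minus; apply CV_mult; auto.
  apply CV_plus; apply CV_mult; auto.
Qed.

Lemma Cconv_const (a : C) : Cconv (fun _ => a) a.
Proof.
  intros eps Heps. exists O. intros. toC. replace (a - a)%C with (RtoC 0) by ring.
  rewrite Cmod_0. auto.
Qed.

Lemma Cconv_ext u v l : (forall n, u n = v n) -> Cconv u l -> Cconv v l.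
Proof. intros E H eps He. destruct (H eps He) as [N HN]. exists N. intros. rewrite <- E. auto. Qed.

Lemma Cconv_ext_eventually u v l N0 :
  (forall n, (n >= N0)%nat -> u n = v n) -> Cconv u l -> Cconv v l.
Proof.
  intros E H eps He. destruct (H eps He) as [N HN]. exists (max N N0). intros.
  rewrite <- E by lia. apply HN; lia.
Qed.

Lemma Cconv_shift u l k : Cconv u l -> Cconv (fun n => u (n + k)%nat) l.
Proof. intros H eps He. destruct (H eps He) as [N HN]. exists N. intros. apply HN; lia. Qed.

Lemma Cconv_neq_0 u L delta : 0 < delta -> (forall n, delta <= Cmod (u n)) -> Cconv u L -> L <> RtoC 0.
Proof.
  intros Hd Hu H E. subst. destruct (H delta Hd) as [N HN]. specialize (HN N (le_n _)). toC.
  replace (u N - 0)%C with (u N) in HN by ring. specialize (Hu N). lra.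
Qed.

Lemma Cconv_of_cauchy_bound (u : nat -> C) (f : nat -> R) :
  (forall n m, (n <= m)%nat -> Cmod (u m - u n) <= f n) ->
  (forall eps, 0 < eps -> exists N, forall n, (n >= N)%nat -> f n < eps) ->
  exists l, Cconv u l /\ forall n, Cmod (l - u n) <= f n.
Proof.
  intros Hb Hf.
  assert (Hc : forall (p : C -> R), (forall z, Rabs (p z) <= Cmod z) ->
     (forall z w, p (z - w)%C = p z - p w) -> Cauchy_crit (fun n => p (u n))).
  { intros p Hp Hl eps He. destruct (Hf eps He) as [N HN]. exists N. intros n m Hn Hm.
    unfold R_dist. destruct (Nat.le_ge_cases n m).
    - rewrite Rabs_minus_sym, <- Hl. eapply Rle_lt_trans. apply Hp.
      eapply Rle_lt_trans. apply Hb; auto. auto.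
    - rewrite <- Hl. eapply Rle_lt_trans. apply Hp. eapply Rle_lt_trans. apply Hb; auto. auto. }
  destruct (R_complete _ (Hc fst Rabs_fst_le_Cmod (fun z w => eq_refl))) as [l1 H1].
  destruct (R_complete _ (Hc snd Rabs_snd_le_Cmod (fun z w => eq_refl))) as [l2 H2].
  assert (Hl : Cconv u (l1, l2)) by (apply Cconv_components; auto).
  exists (l1, l2). split; auto. intros n.
  apply le_epsilon. intros eps He. destruct (Hl eps He) as [N HN].
  specialize (HN (max N n) ltac:(lia)). specialize (Hb n (max N n) ltac:(lia)). toC.
  replace ((l1, l2) - u n)%C with ((u (max N n) - u n) - (u (max N n) - (l1,l2)))%C by ring.
  eapply Rle_trans. unfold Cminus at 1. apply Cmod_triangle. rewrite Cmod_opp. lra.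
Qed.

Lemma Csum_S f n : Csum f (S n) = (Csum f n + f n)%C.
Proof. reflexivity. Qed.

Lemma Csum_first f n : Csum f (S n) = (f O + Csum (fun i => f (S i)) n)%C.
Proof. induction n. simpl; toC; ring. rewrite Csum_S, IHn. simpl; toC; ring. Qed.

Lemma Csum_ext f g n : (forall i, (i < n)%nat -> f i = g i) -> Csum f n = Csum g n.
Proof. induction n; intros H; simpl; auto. rewrite IHn, H; auto. Qed.

Lemma Csum_plus f g n : Csum (fun i => f i + g i)%C n = (Csum f n + Csum g n)%C.
Proof. induction n; simpl; toC. ring. rewrite IHn. ring. Qed.

Lemma Csum_minus f g n : Csum (fun i => f i - g i)%C n = (Csum f n - Csum g n)%C.
Proof. induction n; simpl; toC. ring. rewrite IHn. ring. Qed.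

Lemma Csum_scal (a : C) f n : Csum (fun i => a * f i)%C n = (a * Csum f n)%C.
Proof. induction n; simpl; toC. ring. rewrite IHn. ring. Qed.

Lemma Csum_scal_r (a : C) f n : (Csum f n * a)%C = Csum (fun i => f i * a)%C n.
Proof. rewrite Cmult_comm, <- Csum_scal. apply Csum_ext. intros. cring. Qed.

Lemma Csum_zero f n : (forall i, (i < n)%nat -> f i = RtoC 0) -> Csum f n = RtoC 0.
Proof. induction n; intros H; simpl; toC; auto. rewrite IHn, H; auto. ring. Qed.

Lemma Csum_tail f n m : (n <= m)%nat -> (forall i, (i >= n)%nat -> f i = RtoC 0) -> Csum f m = Csum f n.
Proof. intros Hnm H. induction Hnm; auto. rewrite Csum_S, IHHnm, H by lia. toC. ring. Qed.

Lemma Csum_telescope (F : nat -> C) N : Csum (fun j => F (S j) - F j)%C N = (F N - F O)%C.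
Proof. induction N; simpl; toC. cring. rewrite IHN. cring. Qed.

Lemma Csum_swap (F : nat -> nat -> C) M N :
  Csum (fun k => Csum (fun j => F j k) M) N = Csum (fun j => Csum (fun k => F j k) N) M.
Proof. induction N; simpl. rewrite Csum_zero; auto. rewrite IHN, <- Csum_plus. reflexivity. Qed.

Lemma Cmod_Csum_le f n K : (forall i, (i < n)%nat -> Cmod (f i) <= K) -> Cmod (Csum f n) <= INR n * K.
Proof.
  induction n; intros H; simpl Csum; toC.
  - rewrite Cmod_0. simpl. lra.
  - eapply Rle_trans. apply Cmod_triangle. rewrite S_INR.
    pose proof (IHn (fun i Hi => H i ltac:(lia))). pose proof (H n ltac:(lia)). lra.
Qed.

Lemma Cseries_finite f n : (forall i, (i >= n)%nat -> f i = RtoC 0) -> Cseries f = Csum f n.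
Proof.
  intros H. apply Clim_eq. apply (Cconv_ext_eventually (fun _ => Csum f n) _ _ n).
  - intros. symmetry. apply Csum_tail; auto.
  - apply Cconv_const.
Qed.

Lemma Cconv_Csum (u : nat -> nat -> C) (l : nat -> C) M :
  (forall j, (j < M)%nat -> Cconv (u j) (l j)) -> Cconv (fun N => Csum (fun j => u j N) M) (Csum l M).
Proof.
  induction M; intros H; simpl. apply Cconv_const.
  apply Cconv_plus. apply IHM. intros; apply H; lia. apply H; lia.
Qed.

Lemma Csum_geometric_domination (a : nat -> C) (M rho : R) :
  0 <= M -> 0 <= rho < 1 -> (forall k, Cmod (a k) <= M * rho ^ k) ->
  exists l, Cconv (Csum a) l /\ forall n, Cmod (l - Csum a n) <= M * rho ^ n / (1 - rho).
Proof.
  intros HM Hr Ha. apply Cconv_of_cauchy_bound.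
  - intros n m Hnm. replace m with (n + (m - n))%nat by lia. generalize (m - n)%nat. intros d.
    assert (Hd : Cmod (Csum a (n + d) - Csum a n) <= M * (rho ^ n - rho ^ (n + d)) / (1 - rho)).
    { induction d.
      - rewrite Nat.add_0_r. toC. replace (Csum a n - Csum a n)%C with (RtoC 0) by ring.
        rewrite Cmod_0. replace (rho ^ n - rho ^ n) with 0 by ring.
        unfold Rdiv. rewrite Rmult_0_r, Rmult_0_l. lra.
      - rewrite Nat.add_succ_r, Csum_S. toC.
        replace (Csum a (n + d) + a (n + d)%nat - Csum a n)%C
          with ((Csum a (n + d) - Csum a n) + a (n+d)%nat)%C by ring.
        eapply Rle_trans. apply Cmod_triangle. specialize (Ha (n + d)%nat).
        apply Rle_trans with (M * (rho ^ n - rho ^ (n + d)) / (1 - rho) + M * rho ^ (n + d)). lra.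
        right. simpl. field. lra. }
    eapply Rle_trans. apply Hd. unfold Rdiv. apply Rmult_le_compat_r.
    apply Rlt_le, Rinv_0_lt_compat; lra.
    apply Rmult_le_compat_l; auto. pose proof (pow_le rho (n + d) ltac:(lra)). lra.
  - intros eps He.
    destruct (pow_lt_1_zero rho ltac:(rewrite Rabs_pos_eq; lra) (eps * (1 - rho) / (M + 1)))
      as [N HN].
    apply Rdiv_lt_0_compat; nra. exists N. intros n Hn. specialize (HN n Hn).
    rewrite Rabs_pos_eq in HN by (apply pow_le; lra).
    apply Rmult_lt_reg_r with (1 - rho). lra.
    unfold Rdiv. rewrite Rmult_assoc, Rinv_l, Rmult_1_r by lra.
    apply Rlt_le_trans with ((M+1) * (eps * (1 - rho) / (M + 1))).
    pose proof (pow_le rho n ltac:(lra)). nra. right. field. lra.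
Qed.

(** * q-Pochhammer symbols *)

Lemma qpoch_0 x q : qpoch x q 0 = RtoC 1.
Proof. reflexivity. Qed.

Lemma qpoch_S x q j : qpoch x q (S j) = (qpoch x q j * (1 - x * RtoC (q ^ j)))%C.
Proof. reflexivity. Qed.

Lemma qpoch_shift x q j : qpoch x q (S j) = ((1 - x) * qpoch (x * RtoC q) q j)%C.
Proof.
  induction j. simpl; toC. ring.
  rewrite qpoch_S, IHj, qpoch_S. toC. rewrite RtoC_powS. ring.
Qed.

Lemma qpoch_add x q j m : qpoch x q (j + m) = (qpoch x q j * qpoch (x * RtoC (q ^ j)) q m)%C.
Proof.
  induction m. rewrite Nat.add_0_r. simpl. cring.
  rewrite Nat.add_succ_r, !qpoch_S, IHm, pow_add, RtoC_mult. toC. ring.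
Qed.

(* (q^{-k};q)_j vanishes for j > k: this is what makes the series terminate. *)
Lemma qpoch_invpow_vanishes q k j : 0 < q -> (j > k)%nat -> qpoch (RtoC (/ q ^ k)) q j = RtoC 0.
Proof.
  intros Hq Hj. replace j with (S k + (j - S k))%nat by lia. rewrite qpoch_add, qpoch_S.
  toC. replace (1 - RtoC (/ q ^ k) * RtoC (q ^ k))%C with (RtoC 0). cring.
  rewrite <- RtoC_mult, Rinv_l. cring. apply pow_nonzero; lra.
Qed.

Lemma qpoch_neq_0 x q j : 0 < q -> (forall m, x <> RtoC (/ q ^ m)) -> qpoch x q j <> RtoC 0.
Proof.
  intros Hq H. induction j. simpl. toC. apply RtoC_neq_0. lra.
  rewrite qpoch_S. toC. apply Cmult_neq_0; auto. intro E. apply (H j).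
  assert (RtoC (q ^ j) <> RtoC 0) by (apply RtoC_neq_0, pow_nonzero; lra).
  rewrite RtoC_inv by (apply pow_nonzero; lra).
  transitivity ((1 - (1 - x * RtoC (q ^ j))) / RtoC (q ^ j))%C. apply Ceq_via_sum. field. auto.
  rewrite E. apply Ceq_via_sum. field. auto.
Qed.

Lemma invpow_ge_1 q m : 0 < q < 1 -> 1 <= / q ^ m.
Proof.
  intros Hq. pose proof (pow_le_one q m ltac:(lra)). pose proof (pow_lt q m ltac:(lra)).
  rewrite <- Rinv_1. apply Rinv_le_contravar; lra.
Qed.

Lemma qpoch_neq_0_small x q j : 0 < q < 1 -> Cmod x < 1 -> qpoch x q j <> RtoC 0.
Proof.
  intros Hq Hx. apply qpoch_neq_0. lra. intros m E. subst x.
  pose proof (invpow_ge_1 q m Hq). rewrite Cmod_R, Rabs_pos_eq in Hx by lra. lra.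
Qed.

Lemma qpoch_q_neq_0 q n : 0 < q < 1 -> qpoch (RtoC q) q n <> RtoC 0.
Proof. intros Hq. apply qpoch_neq_0_small; auto. rewrite Cmod_R, Rabs_pos_eq; lra. Qed.

Lemma geometric_partial_sum_S q n : q <> 1 -> (1 - q ^ n) / (1 - q) + q ^ n = (1 - q ^ S n) / (1 - q).
Proof. intros. simpl. field. lra. Qed.

Lemma qpoch_upper_bound x q n : 0 < q < 1 -> Cmod (qpoch x q n) <= exp (Cmod x * ((1 - q ^ n) / (1 - q))).
Proof.
  intros Hq. induction n.
  - simpl. toC. rewrite Cmod_1. replace ((1 - 1) / (1 - q)) with 0 by (field; lra).
    rewrite Rmult_0_r, exp_0. lra.
  - rewrite qpoch_S, Cmod_mult. toC. rewrite <- geometric_partial_sum_S by lra.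
    rewrite Rmult_plus_distr_l, exp_plus.
    apply Rmult_le_compat; auto using Cmod_ge_0.
    eapply Rle_trans. unfold Cminus. apply Cmod_triangle.
    rewrite Cmod_1, Cmod_opp, Cmod_mult, Cmod_R, Rabs_pos_eq by (apply pow_le; lra).
    apply exp_ineq1_le.
Qed.

Lemma qpoch_uniform_bound x q n : 0 < q < 1 -> Cmod (qpoch x q n) <= exp (Cmod x / (1 - q)).
Proof.
  intros Hq. eapply Rle_trans. apply qpoch_upper_bound; auto. apply exp_le_mono.
  pose proof (Cmod_ge_0 x). pose proof (pow_lt q n ltac:(lra)).
  unfold Rdiv. rewrite <- Rmult_assoc. apply Rmult_le_compat_r. left; apply Rinv_0_lt_compat; lra. nra.
Qed.

Lemma qpoch_lower_bound x q n : 0 < q < 1 -> Cmod x < 1 ->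
  exp (- (Cmod x * ((1 - q ^ n) / (1 - q)) / (1 - Cmod x))) <= Cmod (qpoch x q n).
Proof.
  intros Hq Hx. pose proof (Cmod_ge_0 x). induction n.
  - simpl. toC. rewrite Cmod_1. replace ((1 - 1) / (1 - q)) with 0 by (field; lra).
    replace (- (Cmod x * 0 / (1 - Cmod x))) with 0 by (field; lra). rewrite exp_0. lra.
  - rewrite qpoch_S, Cmod_mult. toC. rewrite <- geometric_partial_sum_S by lra.
    replace (- (Cmod x * ((1 - q ^ n) / (1 - q) + q ^ n) / (1 - Cmod x)))
      with ((- (Cmod x * ((1 - q ^ n) / (1 - q)) / (1 - Cmod x))) + (- (Cmod x * q ^ n / (1 - Cmod x))))
      by (field; lra).
    rewrite exp_plus. apply Rmult_le_compat; try (left; apply exp_pos); auto.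
    pose proof (pow_le q n ltac:(lra)). pose proof (pow_le_one q n ltac:(lra)).
    eapply Rle_trans. apply (one_minus_ge_exp (Cmod x * q ^ n) (Cmod x)). split; nra. lra.
    pose proof (Cmod_triangle (1 - x * RtoC (q ^ n)) (x * RtoC (q ^ n))) as HT.
    replace (1 - x * RtoC (q ^ n) + x * RtoC (q ^ n))%C with (RtoC 1) in HT by ring.
    rewrite Cmod_1, Cmod_mult, Cmod_R, Rabs_pos_eq in HT by auto. lra.
Qed.

Definition qpoch_q_lower (q : R) : R := exp (- (q * (1 / (1 - q)) / (1 - q))).

Lemma qpoch_q_lower_bound q n : 0 < q < 1 -> qpoch_q_lower q <= Cmod (qpoch (RtoC q) q n).
Proof.
  intros Hq. eapply Rle_trans. 2: apply qpoch_lower_bound; auto.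
  2: rewrite Cmod_R, Rabs_pos_eq; lra.
  rewrite Cmod_R, Rabs_pos_eq by lra. unfold qpoch_q_lower. apply exp_le_mono. apply Ropp_le_contravar.
  pose proof (pow_lt q n ltac:(lra)). unfold Rdiv.
  apply Rmult_le_compat_r. left; apply Rinv_0_lt_compat; lra.
  apply Rmult_le_compat_l. lra. apply Rmult_le_compat_r. left; apply Rinv_0_lt_compat; lra. lra.
Qed.

(* The infinite product converges: its increments are dominated by a geometric series. *)
Lemma qpoch_conv x q : 0 < q < 1 -> Cconv (qpoch x q) (qpoch_inf x q).
Proof.
  intros Hq. unfold qpoch_inf.
  set (a := fun k => (qpoch x q (S k) - qpoch x q k)%C).
  assert (Hs : forall n, qpoch x q n = (1 + Csum a n)%C).
  { intros n. unfold a. rewrite Csum_telescope, qpoch_0. cring. }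
  destruct (Csum_geometric_domination a (exp (Cmod x / (1 - q)) * Cmod x) q) as [l [Hl _]].
  - pose proof (exp_pos (Cmod x / (1 - q))). pose proof (Cmod_ge_0 x). nra.
  - lra.
  - intros k. unfold a. rewrite qpoch_S. toC.
    replace (qpoch x q k * (1 - x * RtoC (q ^ k)) - qpoch x q k)%C
      with (- (qpoch x q k * x * RtoC (q ^ k)))%C by ring.
    rewrite Cmod_opp, !Cmod_mult, Cmod_R, Rabs_pos_eq by (apply pow_le; lra).
    pose proof (qpoch_uniform_bound x q k Hq). pose proof (Cmod_ge_0 x).
    pose proof (pow_le q k ltac:(lra)). pose proof (Cmod_ge_0 (qpoch x q k)).
    rewrite !Rmult_assoc. apply Rmult_le_compat_r. nra. lra.
  - apply (Cconv_Clim _ (1 + l)%C). apply (Cconv_ext (fun n => (1 + Csum a n)%C)). auto.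
    apply Cconv_plus; auto. apply Cconv_const.
Qed.

Lemma qpoch_inf_neq_0 x q : 0 < q < 1 -> Cmod x < 1 -> qpoch_inf x q <> RtoC 0.
Proof.
  intros Hq Hx. apply (Cconv_neq_0 (qpoch x q) _ (exp (- (Cmod x * (1 / (1 - q)) / (1 - Cmod x))))).
  apply exp_pos. 2: apply qpoch_conv; auto.
  intros n. eapply Rle_trans. 2: apply qpoch_lower_bound; auto.
  pose proof (Cmod_ge_0 x). pose proof (pow_le q n ltac:(lra)).
  apply exp_le_mono. apply Ropp_le_contravar. unfold Rdiv.
  apply Rmult_le_compat_r. left; apply Rinv_0_lt_compat; lra.
  apply Rmult_le_compat_l. lra. apply Rmult_le_compat_r. left; apply Rinv_0_lt_compat; lra. lra.
Qed.

Lemma qpoch_inf_split x q j : 0 < q < 1 ->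
  qpoch_inf x q = (qpoch x q j * qpoch_inf (x * RtoC (q ^ j)) q)%C.
Proof.
  intros Hq. apply (Cconv_unique (fun m => qpoch x q (m + j))).
  apply Cconv_shift, qpoch_conv; auto.
  apply (Cconv_ext (fun m => qpoch x q j * qpoch (x * RtoC (q ^ j)) q m)%C).
  intros m. rewrite Nat.add_comm, qpoch_add. reflexivity.
  apply Cconv_mult. apply Cconv_const. apply qpoch_conv; auto.
Qed.

(** * Al-Salam--Chihara polynomials: expansion and three-term recurrence *)

(* Q_k is expanded in the basis phi_j = (c e^{i th}, c e^{-i th}; q)_j with the
   coefficients D_{k,j} of the terminating 3phi2. *)

Lemma Cexpi_mul th : (Cexpi th * Cexpi (- th))%C = RtoC 1.
Proof.
  unfold Cexpi. rewrite cos_neg, sin_neg. unfold Cmult, RtoC; simpl. f_equal.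
  rewrite <- (sin2_cos2 th). unfold Rsqr. ring. ring.
Qed.

Definition two_cos (th : R) : C := (Cexpi th + Cexpi (- th))%C.

Definition asc_basis (q th : R) (c : C) (j : nat) : C :=
  (qpoch (c * Cexpi th) q j * qpoch (c * Cexpi (- th)) q j)%C.

Definition asc_coef (q : R) (c d : C) (k j : nat) : C :=
  (qpoch (RtoC (/ q ^ k)) q j / qpoch (RtoC q) q j *
   (qpoch (c * d * RtoC (q ^ j)) q (k - j) * RtoC (q ^ j)) / c ^ k)%C.

Lemma asc_basis_S q th c j : asc_basis q th c (S j) =
  (asc_basis q th c j * (1 - c * two_cos th * RtoC (q ^ j) + c * c * RtoC (q ^ j) * RtoC (q ^ j)))%C.
Proof.
  unfold asc_basis, two_cos. rewrite !qpoch_S. pose proof (Cexpi_mul th) as Hmul. toC.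
  transitivity (qpoch (c * Cexpi th) q j * qpoch (c * Cexpi (- th)) q j *
     (1 - c * (Cexpi th + Cexpi (- th)) * RtoC (q ^ j)
      + c * c * (Cexpi th * Cexpi (- th)) * RtoC (q ^ j) * RtoC (q ^ j)))%C.
  cring. rewrite Hmul. cring.
Qed.

Lemma asc_coef_vanishes q c d k j : 0 < q -> (j > k)%nat -> asc_coef q c d k j = RtoC 0.
Proof. intros. unfold asc_coef. rewrite qpoch_invpow_vanishes; auto. cring. Qed.

Lemma asc_expand q c d th k M : 0 < q -> (M >= S k)%nat ->
  al_salam_chihara k th c d q = Csum (fun j => asc_coef q c d k j * asc_basis q th c j)%C M.
Proof.
  intros Hq HM. rewrite (Csum_tail _ (S k) M); auto.
  2: { intros. rewrite asc_coef_vanishes; auto. cring. }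
  unfold al_salam_chihara. rewrite Cpow_eq. toC. unfold Cdiv at 1.
  rewrite Cmult_comm, <- Csum_scal. apply Csum_ext. intros i Hi.
  unfold asc_coef, asc_basis, qpoch_list. simpl fold_right. toC. unfold Cdiv. ring.
Qed.

Lemma asc_0 q c d th : al_salam_chihara 0 th c d q = RtoC 1.
Proof. unfold al_salam_chihara, qpoch_list. simpl. cfield. Qed.

Lemma asc_1 q c d th : 0 < q < 1 -> c <> RtoC 0 ->
  al_salam_chihara 1 th c d q = (two_cos th - c - d)%C.
Proof.
  intros Hq Hc. rewrite (asc_expand q c d th 1 2) by (lra || lia).
  simpl Csum. unfold asc_coef, asc_basis, two_cos. simpl (1 - 0)%nat. simpl (1 - 1)%nat.
  rewrite !(qpoch_S _ q 0), !qpoch_0. simpl (q ^ 0). simpl (q ^ 1). simpl Cpow.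
  pose proof (Cexpi_mul th) as Hmul.
  rewrite Rmult_1_r, RtoC_inv by lra.
  assert (RtoC q <> RtoC 0) by (apply RtoC_neq_0; lra).
  assert ((1 - RtoC q * 1)%C <> RtoC 0) by (rewrite Cmult_1_r, <- RtoC_minus; apply RtoC_neq_0; lra).
  transitivity ((1 - c * d) / c - (1 - c * (Cexpi th + Cexpi (- th))
                                   + c * c * (Cexpi th * Cexpi (- th))) / c)%C.
  - toC. set (Q := RtoC q) in *. apply Ceq_via_sum. field.
    repeat split; auto. cbv beta. rewrite <- (Cmult_1_r Q). auto.
  - rewrite Hmul. cfield. auto.
Qed.

Lemma invpow_S_mul q k : q <> 0 -> (RtoC (/ q ^ S k) * RtoC q)%C = RtoC (/ q ^ k).
Proof. intros. rewrite <- RtoC_mult. f_equal. simpl. field. split; auto. apply pow_nonzero; auto. Qed.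

Lemma qpoch_invpow_S q k j : q <> 0 ->
  qpoch (RtoC (/ q ^ S k)) q (S j) = ((1 - RtoC (/ q ^ S k)) * qpoch (RtoC (/ q ^ k)) q j)%C.
Proof. intros. rewrite qpoch_shift, invpow_S_mul; auto. Qed.

Lemma one_minus_invpow_S_neq_0 q k : 0 < q < 1 -> (1 - RtoC (/ q ^ S k))%C <> RtoC 0.
Proof.
  intros Hq. rewrite <- RtoC_minus. apply RtoC_neq_0.
  assert (q ^ S k < 1) by (simpl; pose proof (pow_le_one q k ltac:(lra)); nra).
  assert (0 < q ^ S k) by (apply pow_lt; lra).
  assert (/ q ^ S k > 1) by (rewrite <- Rinv_1; apply Rinv_lt_contravar; lra). lra.
Qed.

Lemma qpoch_invpow_S_inv q k j : 0 < q < 1 ->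
  qpoch (RtoC (/ q ^ k)) q j = (qpoch (RtoC (/ q ^ S k)) q (S j) / (1 - RtoC (/ q ^ S k)))%C.
Proof.
  intros Hq. rewrite qpoch_invpow_S by lra.
  pose proof (one_minus_invpow_S_neq_0 q k Hq). cfield. auto.
Qed.

Lemma qpoch_cd_shift q (c d : C) j s :
  qpoch (c * d * RtoC (q ^ j))%C q (S s)
  = ((1 - c * d * RtoC (q ^ j)) * qpoch (c * d * RtoC (q ^ S j)) q s)%C.
Proof. rewrite qpoch_shift. f_equal. f_equal. rewrite RtoC_powS. cring. Qed.

(* Writing 2 cos th phi_j = (phi_j (1 + c^2 q^{2j}) - phi_{j+1}) / (c q^j), the
   three-term recurrence of Q_k reduces to the following identity between the
   coefficients D_{k,j}, for k = m, m+1, m+2 (E_j is the contribution of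
   phi_{j} coming from the index j-1). *)
Definition asc_coef_shift (q : R) (c d : C) (m j : nat) : C :=
  match j with O => RtoC 0 | S j' => (asc_coef q c d (S m) j' / (c * RtoC (q ^ j')))%C end.

Definition asc_coef_recurrence (q : R) (c d : C) (m j : nat) : Prop :=
  asc_coef q c d (S (S m)) j =
   (asc_coef q c d (S m) j / (c * RtoC (q ^ j)) * (1 + c * c * RtoC (q ^ j) * RtoC (q ^ j))
    - (c + d) * RtoC (q ^ S m) * asc_coef q c d (S m) j
    - (1 - RtoC (q ^ S m)) * (1 - c * d * RtoC (q ^ m)) * asc_coef q c d m j
    - asc_coef_shift q c d m j)%C.

(* The coefficient identity implies the recurrence: the phi_{j+1} terms telescope. *)
Lemma asc_recurrence_of_coef q c d th m : 0 < q -> c <> RtoC 0 ->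
  (forall j, (j < S (S (S m)))%nat -> asc_coef_recurrence q c d m j) ->
  al_salam_chihara (S (S m)) th c d q =
   ((two_cos th - (c + d) * RtoC (q ^ S m)) * al_salam_chihara (S m) th c d q
    - (1 - RtoC (q ^ S m)) * (1 - c * d * RtoC (q ^ m)) * al_salam_chihara m th c d q)%C.
Proof.
  intros Hq Hc Hcoef. rewrite !(asc_expand q c d th _ (S (S (S m)))) by (auto; lia).
  set (F := fun j => (asc_coef_shift q c d m j * asc_basis q th c j)%C).
  transitivity (Csum (fun j =>
     (two_cos th - (c + d) * RtoC (q ^ S m)) * (asc_coef q c d (S m) j * asc_basis q th c j)
     - (1 - RtoC (q ^ S m)) * (1 - c * d * RtoC (q ^ m)) * (asc_coef q c d m j * asc_basis q th c j)
     + (F (S j) - F j))%C (S (S (S m)))).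
  - apply Csum_ext. intros j Hj. rewrite (Hcoef j Hj). unfold F. rewrite asc_basis_S.
    assert (RtoC (q ^ j) <> RtoC 0) by (apply RtoC_neq_0, pow_nonzero; lra).
    toC. apply Ceq_via_sum. simpl asc_coef_shift. field_simplify; auto.
  - rewrite Csum_plus, Csum_minus, Csum_telescope, !Csum_scal.
    assert (Hlast : F (S (S (S m))) = RtoC 0).
    { unfold F. simpl asc_coef_shift. rewrite asc_coef_vanishes by (auto; lia). cring. }
    assert (Hfirst : F O = RtoC 0) by (unfold F; simpl; cring).
    rewrite Hlast, Hfirst. cring.
Qed.

Ltac coef_nonzero := repeat split; try assumption; try (apply Cpow_nz; assumption);
  try (cbv beta; rewrite <- ?RtoC_mult, <- ?RtoC_minus;
       let E := fresh in intro E; apply RtoC_inj in E; nra).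

Lemma asc_coef_recurrence_first q c d m : 0 < q < 1 -> c <> RtoC 0 -> asc_coef_recurrence q c d m O.
Proof.
  intros Hq Hc. unfold asc_coef_recurrence, asc_coef_shift, asc_coef. rewrite !Nat.sub_0_r, !qpoch_0.
  rewrite (qpoch_S (c * d * RtoC (q ^ 0))%C q (S m)), (qpoch_S (c * d * RtoC (q ^ 0))%C q m).
  set (B := qpoch (c * d * RtoC (q ^ 0))%C q m).
  replace (q ^ S m) with (q * q ^ m) by reflexivity. simpl (q ^ 0).
  replace (c ^ S (S m))%C with (c ^ m * (c * c))%C by (simpl; cring).
  replace (c ^ S m)%C with (c ^ m * c)%C by (simpl; cring).
  rewrite !RtoC_mult.
  pose proof (pow_le_one q m ltac:(lra)). pose proof (pow_lt q m ltac:(lra)).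
  set (X := RtoC (q ^ m)) in *. set (Q := RtoC q) in *.
  apply Ceq_via_sum. field. unfold X, Q in *. clear X Q. coef_nonzero.
Qed.

Lemma asc_coef_recurrence_middle q c d n s : 0 < q < 1 -> c <> RtoC 0 ->
  asc_coef_recurrence q c d (n + 1 + s) (S n).
Proof.
  intros Hq Hc. unfold asc_coef_recurrence, asc_coef_shift, asc_coef.
  replace (S (S (n + 1 + s)) - S n)%nat with (S (S s)) by lia.
  replace (S (n + 1 + s) - S n)%nat with (S s) by lia.
  replace (n + 1 + s - S n)%nat with s by lia.
  replace (S (n + 1 + s) - n)%nat with (S (S s)) by lia.
  rewrite (qpoch_S (c * d * RtoC (q ^ S n))%C q (S s)), (qpoch_S (c * d * RtoC (q ^ S n))%C q s).
  rewrite (qpoch_cd_shift q c d n (S s)), (qpoch_S (c * d * RtoC (q ^ S n))%C q s).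
  rewrite (qpoch_invpow_S q (S (n + 1 + s)) n), (qpoch_S (RtoC (/ q ^ S (n + 1 + s))) q n) by lra.
  rewrite (qpoch_invpow_S_inv q (n + 1 + s) (S n)) by lra.
  rewrite (qpoch_S (RtoC (/ q ^ S (n + 1 + s))) q (S n)), (qpoch_S (RtoC (/ q ^ S (n + 1 + s))) q n).
  rewrite (qpoch_S (RtoC q) q n).
  pose proof (qpoch_q_neq_0 q n Hq).
  set (A := qpoch (RtoC (/ q ^ S (n + 1 + s))) q n) in *.
  set (Pq := qpoch (RtoC q) q n) in *.
  set (b := qpoch (c * d * RtoC (q ^ S n))%C q s) in *.
  assert (Hn : 0 < q ^ n) by (apply pow_lt; lra). assert (Hs : 0 < q ^ s) by (apply pow_lt; lra).
  replace (n + 1 + s)%nat with (n + s + 1)%nat by lia.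
  replace (q ^ S (S (n + s + 1))) with (q ^ n * q ^ s * (q * q * q))
    by (replace (S (S (n + s + 1))) with (n + s + 3)%nat by lia; rewrite !pow_add; simpl; ring).
  replace (q ^ S (n + s + 1)) with (q ^ n * q ^ s * (q * q))
    by (replace (S (n + s + 1)) with (n + s + 2)%nat by lia; rewrite !pow_add; simpl; ring).
  replace (q ^ (n + s + 1)) with (q ^ n * q ^ s * q) by (rewrite !pow_add; simpl; ring).
  replace (q ^ S n) with (q * q ^ n) by reflexivity.
  replace (q ^ S s) with (q * q ^ s) by reflexivity.
  replace (c ^ S (S (n + s + 1)))%C with (c ^ n * c ^ s * (c * c * c))%C
    by (replace (S (S (n + s + 1))) with (n + s + 3)%nat by lia; rewrite !Cpow_add_r; simpl; cring).
  replace (c ^ S (n + s + 1))%C with (c ^ n * c ^ s * (c * c))%C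
    by (replace (S (n + s + 1)) with (n + s + 2)%nat by lia; rewrite !Cpow_add_r; simpl; cring).
  replace (c ^ (n + s + 1))%C with (c ^ n * c ^ s * c)%C by (rewrite !Cpow_add_r; simpl; cring).
  rewrite !RtoC_inv by (apply Rgt_not_eq; repeat apply Rmult_lt_0_compat; lra).
  rewrite !RtoC_mult.
  set (X := RtoC (q ^ n)) in *. set (Y := RtoC (q ^ s)) in *. set (Q := RtoC q) in *.
  pose proof (pow_le_one q n ltac:(lra)). pose proof (pow_le_one q s ltac:(lra)).
  assert (q ^ n * q ^ s <= 1) by nra. assert (0 < q ^ n * q ^ s) by nra.
  apply Ceq_via_sum. field. unfold X, Y, Q in *. clear X Y Q. coef_nonzero.
Qed.

Lemma asc_coef_recurrence_penultimate q c d m : 0 < q < 1 -> c <> RtoC 0 ->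
  asc_coef_recurrence q c d m (S m).
Proof.
  intros Hq Hc. unfold asc_coef_recurrence, asc_coef_shift.
  rewrite (asc_coef_vanishes q c d m (S m)) by (lra || lia).
  unfold asc_coef.
  replace (S (S m) - S m)%nat with 1%nat by lia. replace (S m - S m)%nat with 0%nat by lia.
  replace (S m - m)%nat with 1%nat by lia.
  rewrite (qpoch_invpow_S q (S m) m) by lra.
  rewrite (qpoch_S (RtoC (/ q ^ S m)) q m), (qpoch_S (RtoC q) q m).
  rewrite !(qpoch_S _ q 0), !qpoch_0.
  pose proof (qpoch_q_neq_0 q m Hq).
  set (A := qpoch (RtoC (/ q ^ S m)) q m) in *.
  set (Pq := qpoch (RtoC q) q m) in *.
  pose proof (pow_le_one q m ltac:(lra)). pose proof (pow_lt q m ltac:(lra)).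
  replace (q ^ S (S m)) with (q ^ m * (q * q)) by (simpl; ring).
  replace (q ^ S m) with (q ^ m * q) by (simpl; ring). simpl (q ^ 0).
  replace (c ^ S (S m))%C with (c ^ m * (c * c))%C by (simpl; cring).
  replace (c ^ S m)%C with (c ^ m * c)%C by (simpl; cring).
  rewrite !RtoC_inv by (apply Rgt_not_eq; repeat apply Rmult_lt_0_compat; lra).
  rewrite !RtoC_mult.
  set (X := RtoC (q ^ m)) in *. set (Q := RtoC q) in *.
  apply Ceq_via_sum. field. unfold X, Q in *. clear X Q. coef_nonzero.
Qed.

Lemma asc_coef_recurrence_last q c d m : 0 < q < 1 -> c <> RtoC 0 ->
  asc_coef_recurrence q c d m (S (S m)).
Proof.
  intros Hq Hc. unfold asc_coef_recurrence, asc_coef_shift.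
  rewrite (asc_coef_vanishes q c d m (S (S m))), (asc_coef_vanishes q c d (S m) (S (S m))) by (lra || lia).
  unfold asc_coef.
  replace (S (S m) - S (S m))%nat with 0%nat by lia. replace (S m - S m)%nat with 0%nat by lia.
  rewrite (qpoch_invpow_S q (S m) (S m)) by lra.
  rewrite (qpoch_S (RtoC q) q (S m)), !qpoch_0.
  pose proof (qpoch_q_neq_0 q (S m) Hq).
  set (A := qpoch (RtoC (/ q ^ S m)) q (S m)) in *.
  set (Pq := qpoch (RtoC q) q (S m)) in *.
  pose proof (pow_le_one q m ltac:(lra)). pose proof (pow_lt q m ltac:(lra)).
  replace (q ^ S (S m)) with (q ^ m * (q * q)) by (simpl; ring).
  replace (q ^ S m) with (q ^ m * q) by (simpl; ring).
  replace (c ^ S (S m))%C with (c ^ m * (c * c))%C by (simpl; cring).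
  replace (c ^ S m)%C with (c ^ m * c)%C by (simpl; cring).
  rewrite !RtoC_inv by (apply Rgt_not_eq; repeat apply Rmult_lt_0_compat; lra).
  rewrite !RtoC_mult.
  set (X := RtoC (q ^ m)) in *. set (Q := RtoC q) in *.
  apply Ceq_via_sum. field. unfold X, Q in *. clear X Q. coef_nonzero.
Qed.

Lemma asc_recurrence q c d th m : 0 < q < 1 -> c <> RtoC 0 ->
  al_salam_chihara (S (S m)) th c d q =
   ((two_cos th - (c + d) * RtoC (q ^ S m)) * al_salam_chihara (S m) th c d q
    - (1 - RtoC (q ^ S m)) * (1 - c * d * RtoC (q ^ m)) * al_salam_chihara m th c d q)%C.
Proof.
  intros Hq Hc. apply asc_recurrence_of_coef; try lra; auto.
  intros [|j] Hj. { apply asc_coef_recurrence_first; auto. }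
  destruct (Nat.lt_trichotomy j m) as [Hlt|[->|Hgt]].
  - replace m with (j + 1 + (m - j - 1))%nat by lia. apply asc_coef_recurrence_middle; auto.
  - apply asc_coef_recurrence_penultimate; auto.
  - replace j with (S m) by lia. apply asc_coef_recurrence_last; auto.
Qed.

(** * Q_k/(q;q)_k as a Cauchy product *)

Lemma Cmult_cancel_l (a x y : C) : a <> RtoC 0 -> (a * x = a * y)%C -> x = y.
Proof.
  intros Ha E. transitivity (/ a * (a * x))%C. cfield. auto.
  rewrite E. cfield. auto.
Qed.

Lemma recurrence2_unique (f g a b e : nat -> C) :
  (forall m, a m <> RtoC 0) ->
  (forall m, (a m * f (S (S m)) = b m * f (S m) - e m * f m)%C) ->
  (forall m, (a m * g (S (S m)) = b m * g (S m) - e m * g m)%C) ->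
  f O = g O -> f 1%nat = g 1%nat -> forall n, f n = g n.
Proof.
  intros Ha Hf Hg H0 H1.
  assert (Hpair : forall n, f n = g n /\ f (S n) = g (S n)).
  { induction n as [|n [IH0 IH1]]; split; auto.
    apply (Cmult_cancel_l (a n)); [apply Ha|]. rewrite Hf, Hg, IH0, IH1. reflexivity. }
  intros n. apply Hpair.
Qed.

Definition cauchy_prod (u v : nat -> C) (n : nat) : C :=
  Csum (fun i => u i * v (n - i)%nat)%C (S n).

Definition qcauchy_prod (q : R) (u v : nat -> C) (n : nat) : C :=
  Csum (fun i => RtoC (q ^ i) * u i * v (n - i)%nat)%C (S n).

Section CauchyProductRecurrence.
Variables (q : R) (u v : nat -> C) (al ga be de : C).
Hypothesis u_rec : forall i, ((1 - RtoC (q ^ S i)) * u (S i) = (al - ga * RtoC (q ^ i)) * u i)%C.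
Hypothesis v_rec : forall l, ((1 - RtoC (q ^ S l)) * v (S l) = (be - de * RtoC (q ^ l)) * v l)%C.

Let w := cauchy_prod u v.
Let z := qcauchy_prod q u v.

(* Splitting 1 - q^{n+1} = (1 - q^i) + q^i (1 - q^{n+1-i}) in the (n+1)-st term,
   each part is re-expressed with the recurrences of u and v. *)
Lemma cauchy_prod_step n :
  ((1 - RtoC (q ^ S n)) * w (S n) = (al - de * RtoC (q ^ n)) * w n + (be - ga) * z n)%C /\
  (w (S n) - z (S n) = al * w n - ga * z n)%C.
Proof.
  assert (HA : Csum (fun i => (1 - RtoC (q ^ i)) * u i * v (S n - i)%nat)%C (S (S n)) =
     (al * w n - ga * z n)%C).
  { rewrite Csum_first. simpl (q ^ 0). unfold w, z, cauchy_prod, qcauchy_prod.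
    rewrite <- !Csum_scal, <- Csum_minus. toC.
    replace (1 - RtoC 1)%C with (RtoC 0) by cring. rewrite Cmult_0_l, Cmult_0_l, Cplus_0_l.
    apply Csum_ext. intros i Hi. simpl (S n - S i)%nat. rewrite u_rec. cring. }
  assert (HB : Csum (fun i => RtoC (q ^ i) * u i
                              * ((1 - RtoC (q ^ (S n - i)%nat)) * v (S n - i)%nat))%C (S (S n)) =
     (be * z n - de * RtoC (q ^ n) * w n)%C).
  { rewrite Csum_S. replace (S n - S n)%nat with 0%nat by lia. simpl (q ^ 0).
    unfold w, z, cauchy_prod, qcauchy_prod. rewrite <- !Csum_scal, <- Csum_minus. toC.
    replace (1 - RtoC 1)%C with (RtoC 0) by cring. rewrite Cmult_0_l, Cmult_0_r, Cplus_0_r.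
    apply Csum_ext. intros i Hi. replace (S n - i)%nat with (S (n - i)) by lia. rewrite v_rec.
    replace (q ^ n) with (q ^ i * q ^ (n - i)) by (rewrite <- pow_add; f_equal; lia).
    rewrite RtoC_mult. cring. }
  split.
  - transitivity (Csum (fun i => (1 - RtoC (q ^ i)) * u i * v (S n - i)%nat)%C (S (S n)) +
       Csum (fun i => RtoC (q ^ i) * u i
                      * ((1 - RtoC (q ^ (S n - i)%nat)) * v (S n - i)%nat))%C (S (S n)))%C.
    + unfold w, cauchy_prod. rewrite <- Csum_scal, <- Csum_plus. apply Csum_ext. intros i Hi.
      replace (q ^ S n) with (q ^ i * q ^ (S n - i)) by (rewrite <- pow_add; f_equal; lia).
      rewrite RtoC_mult. cring.
    + rewrite HA, HB. cring.
  - etransitivity; [|exact HA]. unfold w, z, cauchy_prod, qcauchy_prod.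
    rewrite <- Csum_minus. apply Csum_ext. intros. cring.
Qed.

(* Eliminating the weighted product: when al be = 1, the Cauchy product obeys the
   same three-term recurrence as the Al-Salam--Chihara polynomials. *)
Lemma cauchy_prod_recurrence n : (al * be = 1)%C ->
  ((1 - RtoC (q ^ S (S n))) * w (S (S n)) =
    (al + be - (ga + de) * RtoC (q ^ S n)) * w (S n) - (1 - ga * de * RtoC (q ^ n)) * w n)%C.
Proof.
  intros Hab.
  destruct (cauchy_prod_step (S n)) as [H1 _].
  destruct (cauchy_prod_step n) as [H2 H3].
  rewrite H1.
  assert (Hz : z (S n) = (w (S n) - al * w n + ga * z n)%C).
  { transitivity (w (S n) - (w (S n) - z (S n)))%C. cring. rewrite H3. cring. }
  assert (Hz2 : ((be - ga) * z n = (1 - RtoC (q ^ S n)) * w (S n) - (al - de * RtoC (q ^ n)) * w n)%C)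
    by (rewrite H2; cring).
  rewrite Hz. replace (q ^ S n) with (q * q ^ n) in * by reflexivity. rewrite RtoC_mult in *.
  transitivity ((al - de * (RtoC q * RtoC (q ^ n))) * w (S n) +
      (be - ga) * w (S n) - al * (be - ga) * w n + ga * ((be - ga) * z n))%C.
  cring. rewrite Hz2.
  transitivity ((al + be - (ga + de) * (RtoC q * RtoC (q ^ n))) * w (S n)
                - (al * be - ga * de * RtoC (q ^ n)) * w n)%C.
  cring. rewrite Hab. cring.
Qed.
End CauchyProductRecurrence.

Definition qexp_seq (q : R) (z w g : C) (i : nat) : C :=
  (qpoch (g * w) q i * z ^ i / qpoch (RtoC q) q i)%C.

Lemma qexp_seq_0 q z w g : qexp_seq q z w g O = RtoC 1.
Proof. unfold qexp_seq. simpl. cfield. Qed.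

Lemma qexp_seq_rec q z w g i : 0 < q < 1 -> (z * w = 1)%C ->
  ((1 - RtoC (q ^ S i)) * qexp_seq q z w g (S i) = (z - g * RtoC (q ^ i)) * qexp_seq q z w g i)%C.
Proof.
  intros Hq Hzw. unfold qexp_seq. rewrite !qpoch_S.
  pose proof (qpoch_q_neq_0 q i Hq). pose proof (one_minus_qpow_neq_0 q i Hq).
  replace (q ^ S i) with (q * q ^ i) in * by reflexivity. rewrite RtoC_mult in *. simpl Cpow.
  transitivity (qpoch (g * w) q i * z ^ i / qpoch (RtoC q) q i * (z - g * (z * w) * RtoC (q ^ i)))%C.
  - cfield. auto.
  - rewrite Hzw. cfield. auto.
Qed.

Section AlSalamChiharaNormalized.
Variables (q th : R) (c d : C).
Hypothesis Hq : 0 < q < 1.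
Hypothesis Hc : c <> RtoC 0.

Definition asc_norm (n : nat) : C := (al_salam_chihara n th c d q / qpoch (RtoC q) q n)%C.

Definition asc_left : nat -> C := qexp_seq q (Cexpi th) (Cexpi (- th)) c.
Definition asc_right : nat -> C := qexp_seq q (Cexpi (- th)) (Cexpi th) d.

Lemma Cexpi_mul_neg : (Cexpi (- th) * Cexpi th)%C = RtoC 1.
Proof. rewrite Cmult_comm. apply Cexpi_mul. Qed.

Lemma asc_norm_0 : asc_norm 0 = RtoC 1.
Proof. unfold asc_norm. rewrite asc_0. simpl. cfield. Qed.

Lemma asc_norm_1 : ((1 - RtoC q) * asc_norm 1 = two_cos th - c - d)%C.
Proof.
  unfold asc_norm. rewrite asc_1 by auto. rewrite qpoch_S, qpoch_0. simpl (q ^ 0).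
  pose proof (one_minus_qpow_neq_0 q 0 Hq) as Hnz. simpl (q ^ 1) in Hnz.
  rewrite Rmult_1_r in Hnz. rewrite Cmult_1_r. cfield. auto.
Qed.

Lemma asc_norm_rec m :
  ((1 - RtoC (q ^ S (S m))) * asc_norm (S (S m)) =
   (two_cos th - (c + d) * RtoC (q ^ S m)) * asc_norm (S m)
   - (1 - c * d * RtoC (q ^ m)) * asc_norm m)%C.
Proof.
  unfold asc_norm. rewrite asc_recurrence by auto.
  rewrite !qpoch_S. pose proof (qpoch_q_neq_0 q m Hq).
  pose proof (one_minus_qpow_neq_0 q m Hq). pose proof (one_minus_qpow_neq_0 q (S m) Hq).
  replace (q ^ S (S m)) with (q * q ^ S m) in * by reflexivity.
  replace (q ^ S m) with (q * q ^ m) in * by reflexivity. rewrite !RtoC_mult in *.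
  cfield. auto.
Qed.

Lemma asc_norm_cauchy_prod n : asc_norm n = cauchy_prod asc_left asc_right n.
Proof.
  pose proof (qexp_seq_rec q (Cexpi th) (Cexpi (- th)) c) as Hu.
  pose proof (qexp_seq_rec q (Cexpi (- th)) (Cexpi th) d) as Hv.
  apply (recurrence2_unique _ _ (fun m => 1 - RtoC (q ^ S (S m)))%C
           (fun m => two_cos th - (c + d) * RtoC (q ^ S m))%C
           (fun m => 1 - c * d * RtoC (q ^ m))%C).
  - intros m. apply one_minus_qpow_neq_0; auto.
  - apply asc_norm_rec.
  - intros m. unfold two_cos.
    apply cauchy_prod_recurrence; intros; auto using Cexpi_mul, Cexpi_mul_neg.
  - rewrite asc_norm_0. unfold cauchy_prod, asc_left, asc_right. simpl Csum.
    rewrite !qexp_seq_0. cring.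
  - apply (Cmult_cancel_l (1 - RtoC q)%C).
    { pose proof (one_minus_qpow_neq_0 q 0 Hq) as H. simpl in H. rewrite Rmult_1_r in H. auto. }
    rewrite asc_norm_1. unfold cauchy_prod, asc_left, asc_right. simpl Csum. simpl (1 - 0)%nat.
    pose proof (Hu 0%nat Hq (Cexpi_mul th)) as Hu0. pose proof (Hv 0%nat Hq Cexpi_mul_neg) as Hv0.
    simpl (q ^ 1) in *. simpl (q ^ 0) in *. rewrite Rmult_1_r in *.
    rewrite !qexp_seq_0 in *. unfold two_cos.
    transitivity ((1 - RtoC q) * qexp_seq q (Cexpi (- th)) (Cexpi th) d 1
                  + (1 - RtoC q) * qexp_seq q (Cexpi th) (Cexpi (- th)) c 1)%C.
    + rewrite Hu0, Hv0. cring.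
    + cring.
Qed.

(** * The generating function of g_n = Q_n/(q;q)_n *)

Lemma Cmod_expi (a : R) : Cmod (Cexpi a) = 1.
Proof.
  unfold Cmod, Cexpi. simpl fst; simpl snd. replace (cos a ^ 2 + sin a ^ 2) with 1. apply sqrt_1.
  pose proof (sin2_cos2 a). unfold Rsqr in H. nra.
Qed.

Lemma qexp_seq_bound z w g i : Cmod z = 1 -> Cmod w = 1 ->
  Cmod (qexp_seq q z w g i) <= exp (Cmod g / (1 - q)) / qpoch_q_lower q.
Proof.
  intros Hz Hw. unfold qexp_seq, Cdiv. rewrite !Cmod_mult, Cmod_inv by (apply qpoch_q_neq_0; auto).
  rewrite Cmod_pow, Hz, pow1, Rmult_1_r.
  pose proof (qpoch_uniform_bound (g * w)%C q i Hq) as Hup. rewrite Cmod_mult, Hw, Rmult_1_r in Hup.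
  pose proof (qpoch_q_lower_bound q i Hq). pose proof (exp_pos (- (q * (1 / (1 - q)) / (1 - q)))).
  unfold Rdiv. apply Rmult_le_compat; auto using Cmod_ge_0.
  left. apply Rinv_0_lt_compat. unfold qpoch_q_lower in *. lra.
  apply Rinv_le_contravar; auto.
Qed.

Definition asc_norm_const : R :=
  exp (Cmod c / (1 - q)) / qpoch_q_lower q * (exp (Cmod d / (1 - q)) / qpoch_q_lower q).

Lemma asc_norm_const_nonneg : 0 <= asc_norm_const.
Proof.
  unfold asc_norm_const, qpoch_q_lower.
  apply Rmult_le_pos; left; apply Rdiv_lt_0_compat; apply exp_pos.
Qed.

(* |g_n| <= (n+1) K: each of the n+1 terms of the Cauchy product is bounded by K. *)
Lemma asc_norm_bound n : Cmod (asc_norm n) <= INR (S n) * asc_norm_const.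
Proof.
  rewrite asc_norm_cauchy_prod. apply Cmod_Csum_le. intros i Hi. rewrite Cmod_mult.
  unfold asc_norm_const, asc_left, asc_right.
  apply Rmult_le_compat; auto using Cmod_ge_0, qexp_seq_bound, Cmod_expi.
Qed.

Definition genfun_tail_const (r0 : R) : R := asc_norm_const * ((1 + r0) / (1 - r0)) ^ 2.

Lemma asc_genfun_tail (r0 lam : R) (s : C) : 0 <= r0 < 1 -> 0 <= lam <= 1 ->
  Cmod s <= lam * r0 ->
  exists l, Cconv (Csum (fun k => asc_norm k * s ^ k)%C) l /\ Cmod (l - 1) <= genfun_tail_const r0 * lam.
Proof.
  intros Hr Hl Hs. set (rho := (1 + r0) / 2). set (y := r0 / rho).
  assert (Hrho : 0 < rho < 1) by (unfold rho; lra).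
  assert (Hy : 0 <= y < 1).
  { unfold y. split. apply Rmult_le_pos; [lra|left; apply Rinv_0_lt_compat; lra].
    apply Rmult_lt_reg_r with rho. lra. unfold Rdiv. rewrite Rmult_assoc, Rinv_l by lra. unfold rho. lra. }
  pose proof asc_norm_const_nonneg as HB.
  destruct (Csum_geometric_domination (fun k => asc_norm k * s ^ k)%C
              (asc_norm_const / (1 - y)) (lam * rho)) as [l [Hconv Htail]].
  - apply Rmult_le_pos. auto. left; apply Rinv_0_lt_compat; lra.
  - split; nra.
  - intros k. rewrite Cmod_mult, Cmod_pow.
    pose proof (asc_norm_bound k).
    assert (Cmod s ^ k <= (lam * r0) ^ k) by (apply pow_incr; split; auto using Cmod_ge_0).
    assert (Hsplit : (lam * r0) ^ k = y ^ k * (lam * rho) ^ k).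
    { rewrite <- Rpow_mult_distr. f_equal. unfold y. field. lra. }
    pose proof (linear_geometric_bound y k Hy) as HL. unfold Rdiv in HL. rewrite Rmult_1_l in HL.
    pose proof (pow_le (lam * rho) k ltac:(nra)). pose proof (pow_le y k ltac:(lra)).
    apply Rle_trans with (INR (S k) * asc_norm_const * (Cmod s ^ k)).
    { apply Rmult_le_compat_r. apply pow_le, Cmod_ge_0. auto. }
    apply Rle_trans with (INR (S k) * asc_norm_const * (y ^ k * (lam * rho) ^ k)).
    { apply Rmult_le_compat_l. apply Rmult_le_pos; auto. apply pos_INR. lra. }
    replace (INR (S k) * asc_norm_const * (y ^ k * (lam * rho) ^ k))
      with (asc_norm_const * (INR (S k) * y ^ k) * (lam * rho) ^ k) by ring.
    apply Rmult_le_compat_r; auto. unfold Rdiv. apply Rmult_le_compat_l; auto.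
  - exists l. split; auto. specialize (Htail 1%nat). simpl Csum in Htail.
    rewrite asc_norm_0 in Htail. simpl Cpow in Htail. toC.
    replace (0 + 1 * 1)%C with (RtoC 1) in Htail by cring. eapply Rle_trans. apply Htail.
    replace (genfun_tail_const r0 * lam)
      with (asc_norm_const / (1 - y) * (lam * rho) / (1 - rho))
      by (unfold genfun_tail_const, y, rho; field; lra).
    rewrite pow_1. unfold Rdiv. apply Rmult_le_compat_l.
    apply Rmult_le_pos. apply Rmult_le_pos; auto. left; apply Rinv_0_lt_compat; lra. nra.
    apply Rinv_le_contravar. lra. nra.
Qed.

Definition asc_genfun (s : C) : C := Clim (Csum (fun k => asc_norm k * s ^ k)%C).

Lemma asc_genfun_conv s : Cmod s < 1 -> Cconv (Csum (fun k => asc_norm k * s ^ k)%C) (asc_genfun s).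
Proof.
  intros Hs. pose proof (Cmod_ge_0 s).
  destruct (asc_genfun_tail (Cmod s) 1 s ltac:(lra) ltac:(lra) ltac:(lra)) as [l [Hl _]].
  apply (Cconv_Clim _ l Hl).
Qed.

Lemma Cconv_of_geometric_bound (x : nat -> C) (L : C) (K : R) :
  0 <= K -> (forall N, Cmod (x N - L) <= K * q ^ N) -> Cconv x L.
Proof.
  intros HK0 HK eps He.
  destruct (pow_lt_1_zero q ltac:(rewrite Rabs_pos_eq; lra) (eps / (K + 1))) as [N HN].
  { apply Rdiv_lt_0_compat; lra. }
  exists N. intros m Hm. specialize (HN m Hm). specialize (HK m).
  rewrite Rabs_pos_eq in HN by (apply pow_le; lra). toC.
  eapply Rle_lt_trans. apply HK.
  apply Rle_lt_trans with ((K + 1) * q ^ m). pose proof (pow_le q m ltac:(lra)). nra.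
  apply Rmult_lt_reg_r with (/ (K + 1)). apply Rinv_0_lt_compat; lra.
  replace ((K + 1) * q ^ m * / (K + 1)) with (q ^ m) by (field; lra). auto.
Qed.

Lemma asc_genfun_at_zero s : Cmod s < 1 -> Cconv (fun N => asc_genfun (RtoC (q ^ N) * s)%C) (RtoC 1).
Proof.
  intros Hs. pose proof (Cmod_ge_0 s).
  apply (Cconv_of_geometric_bound _ _ (genfun_tail_const (Cmod s))).
  { unfold genfun_tail_const. pose proof asc_norm_const_nonneg.
    apply Rmult_le_pos; auto. apply pow2_ge_0. }
  intros N. pose proof (pow_lt q N ltac:(lra)). pose proof (pow_le_one q N ltac:(lra)).
  assert (Hm : Cmod (RtoC (q ^ N) * s)%C <= q ^ N * Cmod s)
    by (rewrite Cmod_mult, Cmod_R, Rabs_pos_eq by lra; lra).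
  destruct (asc_genfun_tail (Cmod s) (q ^ N) (RtoC (q ^ N) * s)%C ltac:(lra) ltac:(lra) Hm)
    as [l [Hl Hbound]].
  unfold asc_genfun. rewrite (Clim_eq _ l Hl). auto.
Qed.

Definition asc_partial (s : C) (N : nat) : C := Csum (fun k => asc_norm k * s ^ k)%C N.

Lemma asc_partial_q s N :
  asc_partial (RtoC q * s) N = Csum (fun k => asc_norm k * (RtoC (q ^ k) * s ^ k))%C N.
Proof. apply Csum_ext. intros. rewrite Cpow_mult_l, RtoC_pow. reflexivity. Qed.

(* The recurrence of g_n, summed against s^n: the partial-sum form of the
   q-difference equation for G. *)
Lemma asc_partial_qdiff (s : C) N :
  (asc_partial s (S (S N)) - asc_partial (RtoC q * s) (S (S N)) =
   s * (two_cos th * asc_partial s (S N) - (c + d) * asc_partial (RtoC q * s) (S N))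
   - s * s * (asc_partial s N - c * d * asc_partial (RtoC q * s) N))%C.
Proof.
  rewrite !asc_partial_q. unfold asc_partial. rewrite <- Csum_minus. unfold two_cos.
  induction N.
  - simpl Csum. simpl (q ^ 0). simpl (q ^ 1). rewrite asc_norm_0. simpl Cpow.
    pose proof asc_norm_1 as H1. unfold two_cos in H1. rewrite Rmult_1_r. toC.
    transitivity (s * ((1 - RtoC q) * asc_norm 1))%C. cring. rewrite H1. cring.
  - rewrite Csum_S, IHN. rewrite !Csum_S. cbv beta.
    set (B := Csum (fun k => (asc_norm k * s ^ k)%C) N).
    set (B' := Csum (fun k => (asc_norm k * (RtoC (q ^ k) * s ^ k))%C) N).
    pose proof (asc_norm_rec N) as Hrec. unfold two_cos in Hrec.
    replace (q ^ S (S N)) with (q * q * q ^ N) in * by (simpl; ring).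
    replace (q ^ S N) with (q * q ^ N) in * by (simpl; ring).
    rewrite !RtoC_mult in *.
    replace (s ^ S (S N))%C with (s * s * s ^ N)%C by (simpl; cring).
    replace (s ^ S N)%C with (s * s ^ N)%C by (simpl; cring).
    set (g2 := asc_norm (S (S N))) in *. set (g0 := asc_norm N) in *.
    transitivity (s * ((Cexpi th + Cexpi (- th)) * (B + g0 * s ^ N)
                       - (c + d) * (B' + g0 * (RtoC (q ^ N) * s ^ N)))
      - s * s * (B - c * d * B') + s * s * s ^ N * ((1 - RtoC q * RtoC q * RtoC (q ^ N)) * g2))%C.
    cring. rewrite Hrec. cring.
Qed.

Lemma Cmod_q_mul (s : C) : Cmod s < 1 -> Cmod (RtoC q * s)%C < 1.
Proof. intros Hs. rewrite Cmod_mult, Cmod_R, Rabs_pos_eq by lra. pose proof (Cmod_ge_0 s). nra. Qed.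

Lemma asc_genfun_qdiff (s : C) : Cmod s < 1 ->
  (asc_genfun s * (1 - s * Cexpi th) * (1 - s * Cexpi (- th)) =
   asc_genfun (RtoC q * s) * (1 - c * s) * (1 - d * s))%C.
Proof.
  intros Hs.
  set (G := asc_genfun s). set (G' := asc_genfun (RtoC q * s)%C).
  assert (H1 : Cconv (asc_partial s) G) by (apply asc_genfun_conv; auto).
  assert (H2 : Cconv (asc_partial (RtoC q * s)%C) G') by (apply asc_genfun_conv, Cmod_q_mul; auto).
  assert (E : (G - G' = s * (two_cos th * G - (c + d) * G') - s * s * (G - c * d * G'))%C).
  { apply (Cconv_unique (fun N => asc_partial s (N + 2) - asc_partial (RtoC q * s) (N + 2))%C).
    - apply Cconv_minus; apply (Cconv_shift _ _ 2); auto.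
    - apply (Cconv_ext (fun N => s * (two_cos th * asc_partial s (N + 1)
                                     - (c + d) * asc_partial (RtoC q * s) (N + 1))
                         - s * s * (asc_partial s N - c * d * asc_partial (RtoC q * s) N))%C).
      { intros N. rewrite !Nat.add_succ_r, !Nat.add_0_r. symmetry. apply asc_partial_qdiff. }
      apply Cconv_minus; apply Cconv_mult; try apply Cconv_const.
      + apply Cconv_minus; apply Cconv_mult; try apply Cconv_const; apply (Cconv_shift _ _ 1); auto.
      + apply Cconv_minus; auto. apply Cconv_mult; auto. apply Cconv_const. }
  pose proof (Cexpi_mul th) as Hmul. unfold two_cos in E.
  transitivity (G - s * ((Cexpi th + Cexpi (- th)) * G) + s * s * (Cexpi th * Cexpi (- th)) * G)%C.
  cring. rewrite Hmul.
  transitivity (G' + (G - G') - s * ((Cexpi th + Cexpi (- th)) * G) + s * s * G)%C.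
  cring. rewrite E. cring.
Qed.

Lemma asc_genfun_iterate (s : C) N : Cmod s < 1 ->
  (asc_genfun s * qpoch (s * Cexpi th) q N * qpoch (s * Cexpi (- th)) q N =
   qpoch (s * c) q N * qpoch (s * d) q N * asc_genfun (RtoC (q ^ N) * s))%C.
Proof.
  intros Hs. induction N.
  - simpl qpoch. simpl (q ^ 0). toC. replace (RtoC 1 * s)%C with s by cring. cring.
  - rewrite !qpoch_S.
    assert (Hs' : Cmod (RtoC (q ^ N) * s)%C < 1).
    { rewrite Cmod_mult, Cmod_R, Rabs_pos_eq by (apply pow_le; lra).
      pose proof (pow_le_one q N ltac:(lra)). pose proof (Cmod_ge_0 s). nra. }
    pose proof (asc_genfun_qdiff (RtoC (q ^ N) * s)%C Hs') as FE.
    replace (RtoC q * (RtoC (q ^ N) * s))%C with (RtoC (q ^ S N) * s)%C in FE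
      by (rewrite RtoC_powS; cring).
    transitivity ((asc_genfun s * qpoch (s * Cexpi th) q N * qpoch (s * Cexpi (- th)) q N) *
       (1 - s * Cexpi th * RtoC (q ^ N)) * (1 - s * Cexpi (- th) * RtoC (q ^ N)))%C. cring.
    rewrite IHN.
    transitivity (qpoch (s * c) q N * qpoch (s * d) q N *
      (asc_genfun (RtoC (q ^ N) * s) * (1 - RtoC (q ^ N) * s * Cexpi th)
       * (1 - RtoC (q ^ N) * s * Cexpi (- th))))%C.
    cring. rewrite FE. cring.
Qed.

Lemma asc_generating_function (s : C) : Cmod s < 1 ->
  Cconv (Csum (fun k => asc_norm k * s ^ k)%C)
    (qpoch_inf (s * c) q * qpoch_inf (s * d) q
     / (qpoch_inf (s * Cexpi th) q * qpoch_inf (s * Cexpi (- th)) q))%C.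
Proof.
  intros Hs.
  set (A := qpoch_inf (s * Cexpi th)%C q). set (B := qpoch_inf (s * Cexpi (- th))%C q).
  assert (HA : A <> RtoC 0) by (apply qpoch_inf_neq_0; auto; rewrite Cmod_mult, Cmod_expi; lra).
  assert (HB : B <> RtoC 0) by (apply qpoch_inf_neq_0; auto; rewrite Cmod_mult, Cmod_expi; lra).
  (* letting N -> oo in the iterated q-difference equation *)
  assert (E : (asc_genfun s * A * B = qpoch_inf (s * c) q * qpoch_inf (s * d) q * 1)%C).
  { apply (Cconv_unique (fun N => asc_genfun s * qpoch (s * Cexpi th) q N
                                  * qpoch (s * Cexpi (- th)) q N)%C).
    - apply Cconv_mult. apply Cconv_mult. apply Cconv_const. apply qpoch_conv; auto. apply qpoch_conv; auto.
    - apply (Cconv_ext (fun N => qpoch (s * c) q N * qpoch (s * d) q N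
                                 * asc_genfun (RtoC (q ^ N) * s))%C).
      { intros N. symmetry. apply asc_genfun_iterate; auto. }
      apply Cconv_mult. apply Cconv_mult; apply qpoch_conv; auto. apply asc_genfun_at_zero; auto. }
  replace (qpoch_inf (s * c) q * qpoch_inf (s * d) q / (A * B))%C with (asc_genfun s).
  - apply asc_genfun_conv; auto.
  - transitivity ((asc_genfun s * A * B) / (A * B))%C. cfield. auto.
    rewrite E. cfield. auto.
Qed.
End AlSalamChiharaNormalized.

(* A series whose first numerator parameter is q^{-n} and which has as many
   denominator as numerator parameters terminates after n+1 terms. *)
Lemma rphis_terminating n (al bl : list Cpx) q z : 0 < q ->
  (1 + Z.of_nat (length bl) - Z.of_nat (length (RtoC (/ q ^ n) :: al)))%Z = 0%Z ->
  rphis (RtoC (/ q ^ n) :: al) bl q z =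
  Csum (fun j => qpoch_list (RtoC (/ q ^ n) :: al) q j / qpoch_list (RtoC q :: bl) q j * z ^ j)%C (S n).
Proof.
  intros Hq Hlen. unfold rphis. toC. rewrite Hlen. simpl powerRZ.
  rewrite (Cseries_finite _ (S n)).
  - apply Csum_ext. intros. rewrite Cpow_eq. cring.
  - intros i Hi. unfold qpoch_list at 1. simpl fold_right. rewrite qpoch_invpow_vanishes by (auto; lia). cring.
Qed.

Section Bilinear.
Variables (q th : R) (a b c d t : C) (n : nat).
Hypothesis Hq : 0 < q < 1.
Hypothesis Ha : forall m : nat, (a * RtoC q)%C <> RtoC (/ q ^ m).
Hypothesis Ht : Cmod t < 1.
Hypothesis Htc : forall m : nat, (t * c)%C <> RtoC (/ q ^ m).
Hypothesis Htd : forall m : nat, (t * d)%C <> RtoC (/ q ^ m).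
Hypothesis Hc : c <> RtoC 0.

(* A_j = (q^{-n}, ab q^{n+1};q)_j q^j / (q, aq;q)_j, so that
   p_n(q^k) = sum_{j<=n} A_j (q^j)^k. *)
Definition qjacobi_coef (j : nat) : C :=
  (qpoch_list (RtoC (/ q ^ n) :: (a * b * RtoC (q ^ S n))%C :: nil) q j
   / qpoch_list (RtoC q :: (a * RtoC q)%C :: nil) q j * RtoC (q ^ j))%C.

Definition asc_kernel (s : C) : C :=
  (qpoch_inf (s * c) q * qpoch_inf (s * d) q
   / (qpoch_inf (s * Cexpi th) q * qpoch_inf (s * Cexpi (- th)) q))%C.

Lemma qpoch_list_q_aq_neq_0 j : qpoch_list (RtoC q :: (a * RtoC q)%C :: nil) q j <> RtoC 0.
Proof.
  unfold qpoch_list. simpl fold_right. apply Cmult_neq_0. apply qpoch_q_neq_0; auto.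
  apply Cmult_neq_0. apply qpoch_neq_0; auto; lra. apply RtoC_neq_0. lra.
Qed.

Lemma lhs_partial_sum N :
  Csum (fun k => (t ^ k / qpoch (RtoC q) q k) *
                 (little_qjacobi n (RtoC (q ^ k)) a b q * al_salam_chihara k th c d q))%C N =
  Csum (fun j => qjacobi_coef j * asc_partial q th c d (t * RtoC (q ^ j)) N)%C (S n).
Proof.
  unfold asc_partial.
  transitivity (Csum (fun j => Csum (fun k => qjacobi_coef j
                  * (asc_norm q th c d k * (t * RtoC (q ^ j)) ^ k))%C N) (S n)).
  2: { apply Csum_ext. intros. rewrite Csum_scal. reflexivity. }
  rewrite Csum_swap. apply Csum_ext. intros k Hk.
  unfold little_qjacobi. rewrite rphis_terminating by (lra || reflexivity).
  rewrite Csum_scal_r, <- Csum_scal. apply Csum_ext. intros j Hj.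
  unfold qjacobi_coef, asc_norm. toC. rewrite !Cpow_mult_l, <- !RtoC_pow.
  replace ((q ^ j) ^ k) with ((q ^ k) ^ j) by (rewrite <- !pow_mult; f_equal; lia).
  pose proof (qpoch_q_neq_0 q k Hq). pose proof (qpoch_list_q_aq_neq_0 j).
  cfield. auto.
Qed.

(* The right-hand side is sum_{j<=n} A_j K(t q^j): split each (x;q)_oo as
   (x;q)_j (x q^j;q)_oo. *)
Lemma rhs_finite_sum :
  ((qpoch_inf (t * c)%C q * qpoch_inf (t * d)%C q /
      (qpoch_inf (t * Cexpi th)%C q * qpoch_inf (t * Cexpi (- th))%C q)) *
     rphis (RtoC (/ q ^ n) :: (a * b * RtoC (q ^ (S n)))%C
             :: (t * Cexpi th)%C :: (t * Cexpi (- th))%C :: nil)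
            ((a * RtoC q)%C :: (t * c)%C :: (t * d)%C :: nil) q (RtoC q))%C
  = Csum (fun j => qjacobi_coef j * asc_kernel (t * RtoC (q ^ j)))%C (S n).
Proof.
  rewrite rphis_terminating by (lra || reflexivity).
  rewrite <- Csum_scal. apply Csum_ext. intros j Hj.
  unfold qjacobi_coef, asc_kernel, qpoch_list. simpl fold_right.
  rewrite (qpoch_inf_split (t * c)%C q j Hq), (qpoch_inf_split (t * d)%C q j Hq),
    (qpoch_inf_split (t * Cexpi th)%C q j Hq), (qpoch_inf_split (t * Cexpi (- th))%C q j Hq).
  replace (t * c * RtoC (q ^ j))%C with (t * RtoC (q ^ j) * c)%C by cring.
  replace (t * d * RtoC (q ^ j))%C with (t * RtoC (q ^ j) * d)%C by cring.
  replace (t * Cexpi th * RtoC (q ^ j))%C with (t * RtoC (q ^ j) * Cexpi th)%C by cring.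
  replace (t * Cexpi (- th) * RtoC (q ^ j))%C with (t * RtoC (q ^ j) * Cexpi (- th))%C by cring.
  assert (Hsj : Cmod (t * RtoC (q ^ j))%C < 1).
  { rewrite Cmod_mult, Cmod_R, Rabs_pos_eq by (apply pow_le; lra).
    pose proof (pow_le_one q j ltac:(lra)). pose proof (Cmod_ge_0 t). pose proof (pow_le q j ltac:(lra)). nra. }
  assert (Hte : forall a', Cmod (t * Cexpi a')%C < 1) by (intros; rewrite Cmod_mult, Cmod_expi; lra).
  assert (Hsje : forall a', Cmod (t * RtoC (q ^ j) * Cexpi a')%C < 1)
    by (intros; rewrite Cmod_mult, Cmod_expi; lra).
  pose proof (qpoch_inf_neq_0 _ q Hq (Hsje th)). pose proof (qpoch_inf_neq_0 _ q Hq (Hsje (- th))).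
  pose proof (qpoch_neq_0_small _ q j Hq (Hte th)). pose proof (qpoch_neq_0_small _ q j Hq (Hte (- th))).
  pose proof (qpoch_neq_0 (t * c)%C q j ltac:(lra) Htc).
  pose proof (qpoch_neq_0 (t * d)%C q j ltac:(lra) Htd).
  pose proof (qpoch_neq_0 (a * RtoC q)%C q j ltac:(lra) Ha).
  pose proof (qpoch_q_neq_0 q j Hq).
  rewrite <- RtoC_pow. cfield. repeat split; auto.
Qed.

Lemma bilinear_generating_function :
  Cconv
    (Csum (fun k =>
       (t ^ k / qpoch (RtoC q) q k) *
            (little_qjacobi n (RtoC (q ^ k)) a b q * al_salam_chihara k th c d q))%C)
    ((qpoch_inf (t * c)%C q * qpoch_inf (t * d)%C q /
        (qpoch_inf (t * Cexpi th)%C q * qpoch_inf (t * Cexpi (- th))%C q)) *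
       rphis (RtoC (/ q ^ n) :: (a * b * RtoC (q ^ (S n)))%C
               :: (t * Cexpi th)%C :: (t * Cexpi (- th))%C :: nil)
              ((a * RtoC q)%C :: (t * c)%C :: (t * d)%C :: nil)
              q (RtoC q))%C.
Proof.
  rewrite rhs_finite_sum.
  apply (Cconv_ext _ _ _ (fun N => eq_sym (lhs_partial_sum N))).
  apply Cconv_Csum. intros j Hj. apply Cconv_mult. apply Cconv_const.
  apply asc_generating_function; auto.
  rewrite Cmod_mult, Cmod_R, Rabs_pos_eq by (apply pow_le; lra).
  pose proof (pow_le_one q j ltac:(lra)). pose proof (Cmod_ge_0 t). pose proof (pow_le q j ltac:(lra)). nra.
Qed.
End Bilinear.

End BilinearGeneratingFunction.

(* The statement in the pair representation of complex numbers. *)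
Theorem mainTheorem6 (q : R) (a b c d t : Cpx) (n : nat) (th : R) :
  0 < q < 1 ->
  (forall m : nat, Cmul a (RtoC q) <> RtoC (/ q ^ m)) ->
  Cnorm t < 1 ->
  (forall m : nat, Cmul t c <> RtoC (/ q ^ m)) ->
  (forall m : nat, Cmul t d <> RtoC (/ q ^ m)) ->
  c <> C0 ->
  0 <= th <= PI ->
  Cconv
    (Csum (fun k =>
       Cmul (Cdiv (Cpow t k) (qpoch (RtoC q) q k))
            (Cmul (little_qjacobi n (RtoC (q ^ k)) a b q)
                  (al_salam_chihara k th c d q))))
    (Cmul
       (Cdiv (Cmul (qpoch_inf (Cmul t c) q) (qpoch_inf (Cmul t d) q))
             (Cmul (qpoch_inf (Cmul t (Cexpi th)) q)
                   (qpoch_inf (Cmul t (Cexpi (- th))) q)))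
       (rphis (RtoC (/ q ^ n) :: Cmul (Cmul a b) (RtoC (q ^ (S n)))
               :: Cmul t (Cexpi th) :: Cmul t (Cexpi (- th)) :: nil)
              (Cmul a (RtoC q) :: Cmul t c :: Cmul t d :: nil)
              q (RtoC q))).
Proof.
  intros Hq Ha Ht Htc Htd Hc _.
  pose proof (BilinearGeneratingFunction.bilinear_generating_function q th a b c d t n Hq Ha Ht Htc Htd Hc)
    as Hbil.
  eapply BilinearGeneratingFunction.Cconv_ext; [|exact Hbil].
  intros N. apply BilinearGeneratingFunction.Csum_ext. intros k _.
  rewrite BilinearGeneratingFunction.Cpow_eq. reflexivity.
Qed.
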